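(* Define real sequences by the Gauss–Legendre iteration: $a_0 = 1$, $b_0 = 1/\sqrt{2}$, $s_0 = \tfrac14$, and for $n \ge 0$ \[ a_{n+1} = \frac{a_n+b_n}{2},\quad b_{n+1} = \sqrt{a_n b_n},\quad c_{n+1} = a_n - a_{n+1},\quad s_{n+1} = s_n - 2^n c_{n+1}^2 . \] Define also sequences by the Borwein quartic iteration: $y_0 = \sqrt{2}-1$, $z_0 = 2y_0^2$, and for $n \ge 0$ \[ y_{n+1} = \frac{1-(1-y_n^4)^{1/4}}{1+(1-y_n^4)^{1/4}},\qquad z_{n+1} = z_n(1+y_{n+1})^4 - 2^{2n+3}y_{n+1}(1+y_{n+1}+y_{n+1}^2), \] and set $\pi_n = 1/z_n$. Then for every $n\ge 0$, \[ \pi_n = \frac{a_{2n+1}^2}{s_{2n}}. \]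
   Context: All square roots and fourth roots are the positive real roots; all quantities are computed in exact real arithmetic. *)

From Stdlib Require Import Reals Lra.
Open Scope R_scope.

Fixpoint gl (n : nat) : R * R * R :=
  match n with
  | O => (1, 1 / sqrt 2, 1 / 4)
  | S m =>
      let '(a, b, s) := gl m in
      let a' := (a + b) / 2 in
      let c' := a - a' in
      (a', sqrt (a * b), s - 2 ^ m * c' ^ 2)
  end.

Definition gl_a (n : nat) : R := fst (fst (gl n)).
Definition gl_b (n : nat) : R := snd (fst (gl n)).
Definition gl_s (n : nat) : R := snd (gl n).
Definition gl_c (n : nat) : R :=
  match n with O => 0 | S m => gl_a m - gl_a (S m) end.  (* c_0 unused *)

Definition root4 (x : R) : R := sqrt (sqrt x).

Fixpoint bw (n : nat) : R * R :=
  match n with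
  | O => (sqrt 2 - 1, 2 * (sqrt 2 - 1) ^ 2)
  | S m =>
      let '(y, z) := bw m in
      let r := root4 (1 - y ^ 4) in
      let y' := (1 - r) / (1 + r) in
      (y', z * (1 + y') ^ 4 - 2 ^ (2 * m + 3) * y' * (1 + y' + y' ^ 2))
  end.

Definition bw_y (n : nat) : R := fst (bw n).
Definition bw_z (n : nat) : R := snd (bw n).
Definition bw_pi (n : nat) : R := 1 / bw_z n.

From Stdlib Require Import Reals Lra Lia.
Open Scope R_scope.

(* Two Gauss-Legendre steps make one Borwein step.  Write a = p^2, b = q^2 for
   a_{2n+1}, b_{2n+1}.  If y_n^4 = 1 - (b/a)^2 then the fourth root in the
   Borwein update is q/p, so y_{n+1} = (p - q)/(p + q); on the other side
   a_{2n+2} = (p^2 + q^2)/2, b_{2n+2} = p q and a_{2n+3} = ((p + q)/2)^2.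
   Both relations y_n^4 = 1 - (b_{2n+1}/a_{2n+1})^2 and
   z_n = s_{2n} / a_{2n+1}^2 then propagate from n to n + 1 by rational
   identities in p and q, using c_{k+1}^2 = a_{k+1}^2 - b_{k+1}^2. *)

Lemma gl_a_S k : gl_a (S k) = (gl_a k + gl_b k) / 2.
Proof. unfold gl_a, gl_b; simpl; now destruct (gl k) as [[a b] s]. Qed.

Lemma gl_b_S k : gl_b (S k) = sqrt (gl_a k * gl_b k).
Proof. unfold gl_a, gl_b; simpl; now destruct (gl k) as [[a b] s]. Qed.

Lemma gl_s_S k : gl_s (S k) = gl_s k - 2 ^ k * gl_c (S k) ^ 2.
Proof. unfold gl_c, gl_a, gl_s; simpl; now destruct (gl k) as [[a b] s]. Qed.

Lemma bw_y_S n :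
  bw_y (S n) = (1 - root4 (1 - bw_y n ^ 4)) / (1 + root4 (1 - bw_y n ^ 4)).
Proof. unfold bw_y; simpl; now destruct (bw n) as [y z]. Qed.

Lemma bw_z_S n :
  bw_z (S n) = bw_z n * (1 + bw_y (S n)) ^ 4
               - 2 ^ (2 * n + 3) * bw_y (S n) * (1 + bw_y (S n) + bw_y (S n) ^ 2).
Proof. unfold bw_y, bw_z; simpl; now destruct (bw n) as [y z]. Qed.

Lemma gl_pos k : 0 < gl_a k /\ 0 < gl_b k.
Proof.
  induction k as [|k [Ha Hb]].
  - unfold gl_a, gl_b; simpl.
    split; [lra|]. apply Rdiv_lt_0_compat; [lra|]. apply sqrt_lt_R0; lra.
  - rewrite gl_a_S, gl_b_S. split; [lra|]. apply sqrt_lt_R0; nra.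
Qed.

Lemma gl_b_S_sqr k : gl_b (S k) ^ 2 = gl_a k * gl_b k.
Proof.
  destruct (gl_pos k) as [Ha Hb].
  rewrite gl_b_S. apply pow2_sqrt. nra.
Qed.

Lemma gl_c_S_sqr k : gl_c (S k) ^ 2 = gl_a (S k) ^ 2 - gl_b (S k) ^ 2.
Proof. simpl gl_c. rewrite gl_b_S_sqr, gl_a_S. field. Qed.

Lemma gl_sqrt_param k : exists p q : R,
  0 < p /\ 0 < q /\ gl_a k = p ^ 2 /\ gl_b k = q ^ 2 /\ gl_b (S k) = p * q.
Proof.
  destruct (gl_pos k) as [Ha Hb].
  exists (sqrt (gl_a k)), (sqrt (gl_b k)).
  repeat split; try (apply sqrt_lt_R0; assumption).
  - symmetry. apply pow2_sqrt. lra.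
  - symmetry. apply pow2_sqrt. lra.
  - rewrite gl_b_S. apply sqrt_mult; lra.
Qed.

Lemma root4_pow4 x : 0 <= x -> root4 (x ^ 4) = x.
Proof.
  intro Hx. unfold root4.
  replace (x ^ 4) with ((x ^ 2) ^ 2) by ring.
  rewrite sqrt_pow2 by (apply pow_le; exact Hx).
  now apply sqrt_pow2.
Qed.

Lemma borwein_y_update a b p q y : 0 < p -> 0 < q -> a = p ^ 2 -> b = q ^ 2 ->
  y ^ 4 = 1 - b ^ 2 / a ^ 2 ->
  (1 - root4 (1 - y ^ 4)) / (1 + root4 (1 - y ^ 4)) = (p - q) / (p + q).
Proof.
  intros Hp Hq -> -> Hy.
  replace (1 - y ^ 4) with ((q / p) ^ 4) by (rewrite Hy; field; lra).
  rewrite root4_pow4 by (apply Rlt_le, Rdiv_lt_0_compat; assumption).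
  field. split; lra.
Qed.

Lemma sqrt2_sqr : sqrt 2 * sqrt 2 = 2.
Proof. apply sqrt_sqrt. lra. Qed.

Lemma bw_y_pow4 n :
  bw_y n ^ 4 = 1 - gl_b (2 * n + 1) ^ 2 / gl_a (2 * n + 1) ^ 2.
Proof.
  induction n as [|n IH].
  - simpl (2 * 0 + 1)%nat.
    rewrite gl_b_S_sqr, gl_a_S.
    change (bw_y 0) with (sqrt 2 - 1). change (gl_a 0) with 1.
    change (gl_b 0) with (1 / sqrt 2).
    pose proof sqrt2_sqr as H2. pose proof (sqrt_lt_R0 2 ltac:(lra)) as Hr.
    replace ((sqrt 2 - 1) ^ 4) with (17 - 12 * sqrt 2) by nra.
    field_simplify_eq; [nra | lra].
  - replace (2 * S n + 1)%nat with (S (S (2 * n + 1))) by lia.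
    set (m := (2 * n + 1)%nat) in *.
    destruct (gl_sqrt_param m) as (p & q & Hp & Hq & Ha & Hb & Hb1).
    rewrite bw_y_S, (borwein_y_update _ _ p q _ Hp Hq Ha Hb IH).
    rewrite gl_b_S_sqr, (gl_a_S (S m)), Hb1, (gl_a_S m), Ha, Hb.
    field. nra.
Qed.

Lemma bw_z_gl n : bw_z n = gl_s (2 * n) / gl_a (2 * n + 1) ^ 2.
Proof.
  induction n as [|n IH].
  - simpl (2 * 0 + 1)%nat. simpl (2 * 0)%nat.
    rewrite gl_a_S.
    change (bw_z 0) with (2 * (sqrt 2 - 1) ^ 2). change (gl_a 0) with 1.
    change (gl_b 0) with (1 / sqrt 2). change (gl_s 0) with (1 / 4).
    pose proof sqrt2_sqr as H2. pose proof (sqrt_lt_R0 2 ltac:(lra)) as Hr.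
    field_simplify_eq; [nra | lra].
  - replace (2 * S n + 1)%nat with (S (S (2 * n + 1))) by lia.
    replace (2 * S n)%nat with (S (S (2 * n))) by lia.
    rewrite bw_z_S, IH, bw_y_S, !gl_s_S, !gl_c_S_sqr.
    pose proof (bw_y_pow4 n) as Hy.
    replace (S (2 * n)) with (2 * n + 1)%nat by lia.
    set (m := (2 * n + 1)%nat) in *.
    destruct (gl_sqrt_param m) as (p & q & Hp & Hq & Ha & Hb & Hb1).
    rewrite (borwein_y_update _ _ p q _ Hp Hq Ha Hb Hy).
    rewrite (gl_a_S (S m)), Hb1, (gl_a_S m), Ha, Hb.
    unfold m; rewrite !pow_add.
    field. nra.
Qed.

Theorem corollary1 : forall n : nat,
  bw_pi n = gl_a (2 * n + 1) ^ 2 / gl_s (2 * n).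
Proof.
  intro n. unfold bw_pi, Rdiv.
  rewrite bw_z_gl. unfold Rdiv.
  (* [Rinv_mult] is unconditional since [/ 0 = 0]. *)
  rewrite Rinv_mult, Rinv_inv. ring.
Qed.
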